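(* Let $(M,J)$ be an almost complex manifold and $\phi$ a Beltrami differential with $\det(I'-\phi\cdot\bar\phi)\neq0$ everywhere. Then, as operators on complex differential forms on $M$, $$e^{-i_\phi}\circ e^{i_\phi|i_{\bar\phi}}=(I-\bar\phi\cdot\phi+\bar\phi)\Finv,$$ $$\big(e^{i_\phi|i_{\bar\phi}}\big)^{-1}\circ e^{i_\phi}=\big(I'+(I''-\bar\phi\cdot\phi)^{-1}-\bar\phi\cdot(I'-\phi\cdot\bar\phi)^{-1}\big)\Finv.$$
   Context: $(M,J)$ is a smooth almost complex manifold of real dimension $2n$ ($J$ not assumed integrable). Locally $\{\theta^i\}_{i=1}^n$ is a frame of $(1,0)$-forms, $\{e_i\}$ the dual frame of $T^{1,0}M$, $\theta^{\bar i}=\overline{\theta^i}$, $e_{\bar i}=\overline{e_i}$. A Beltrami differential is $\phi\in A^{0,1}(M,T^{1,0}M)$. Contraction: $(\rho\otimes X)\lrcorner\alpha:=\rho\wedge(X\lrcorner\alpha)$, extended linearly; $i_\phi=\phi\lrcorner$, $e^{\pm i_\phi}:=\sum_k\frac{(\pm1)^k}{k!}i_\phi^k$. Write $\phi=\phi^i_{\bar j}\theta^{\bar j}\otimes e_i$ and $\bar\phi=\phi^{\bar i}_j\theta^j\otimes e_{\bar i}$ with $\phi^{\bar i}_j=\overline{\phi^i_{\bar j}}$. Identify these with $n\times n$ matrices $\phi=(\phi^i_{\bar j})$, $\bar\phi=(\phi^{\bar i}_j)$ (upper index = row) and $I'$, $I''$ with identity matrices; a matrix expression built from them is identified with the vector-valued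 1-form having these coefficients in the corresponding frames (frame independent): $\bar\phi\cdot\phi$ and $(I''-\bar\phi\cdot\phi)^{-1}$ are $T^{0,1}$-valued $(0,1)$-forms (coefficients times $\theta^{\bar j}\otimes e_{\bar i}$), $\bar\phi\cdot(I'-\phi\cdot\bar\phi)^{-1}$ is the $T^{0,1}$-valued $(1,0)$-form $(\bar\phi\cdot(I'-\phi\cdot\bar\phi)^{-1})^{\bar i}_j\theta^j\otimes e_{\bar i}$, $I'=\theta^i\otimes e_i$, $I''=\theta^{\bar i}\otimes e_{\bar i}$, $I=I'+I''$. For a $T^{\mathbb C}M$-valued 1-form $\varphi$, the simultaneous contraction $\varphi\Finv$ is the function-linear map on forms with $\varphi\Finv(f\beta_1\wedge\cdots\wedge\beta_k)=f(\varphi\lrcorner\beta_1)\wedge\cdots\wedge(\varphi\lrcorner\beta_k)$ for 1-forms $\beta_j$ (and $\varphi\Finv f=f$ for functions); it is not additive in $\varphi$. The extended exponential operator is $e^{i_\phi|i_{\bar\phi}}:=(I+\phi+\bar\phi)\Finv$, i.e. it sends $\theta^i\mapsto\theta^i+\phi\lrcorner\theta^i$, $\theta^{\bar j}\mapsto\theta^{\bar j}+\bar\phi\lrcorner\theta^{\bar j}$, extended multiplicatively; under the determinant condition it is a linear isomorphism on forms, and $(e^{i_\phi|i_{\bar\phi}})^{-1}$ denotes its inverse. *)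

(* Pointwise (fibrewise) model of complex forms on an almost
   complex manifold of real dimension 2n, in a fixed local frame
   theta^1..theta^n, theta^{bar 1}..theta^{bar n}. *)
From HB Require Import structures.
From mathcomp Require Import all_boot all_order all_algebra.
From Stdlib Require Import ClassicalEpsilon.
Set Implicit Arguments. Unset Strict Implicit. Unset Printing Implicit Defensive.
Import Order.TTheory GRing.Theory Num.Theory.
Local Open Scope ring_scope.

(* complex forms at a point: coefficient of the basis monomial
   theta^S = theta^{s1} /\ ... /\ theta^{sk}  (s1 < ... < sk) *)
Notation cform C m := {ffun {set 'I_m} -> C^o}.

Section Forms.
Variable C : numClosedFieldType.
Variable m : nat.
Local Notation form := (cform C m).

Definition mono (S : {set 'I_m}) : form := [ffun T => (T == S)%:R].
Definition theta (b : 'I_m) : form := mono [set b].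

(* sign of theta^S /\ theta^T = sign * theta^(S :|: T) when S, T disjoint *)
Definition wsign (S T : {set 'I_m}) : C :=
  (-1) ^+ #|[set p : 'I_m * 'I_m | [&& p.1 \in S, p.2 \in T & (p.2 < p.1)%N]]|.

Definition wedge (a b : form) : form :=
  \sum_(S : {set 'I_m}) \sum_(T : {set 'I_m})
     (a S * b T * (if [disjoint S & T] then wsign S T else 0)) *: mono (S :|: T).

(* interior product with the frame vector e_a (dual to theta^a) *)
Definition interior (a : 'I_m) (f : form) : form :=
  [ffun S : {set 'I_m} => if a \in S then 0
             else (-1) ^+ #|[set s in S | (s < a)%N]| * f (a |: S)].

(* A vector-valued 1-form is a matrix A with A a b = coefficient of
   theta^b (x) e_a  (upper/vector index = row). Contraction
   (rho (x) X) _| alpha := rho /\ (X _| alpha), extended linearly. *)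
Definition contr (A : 'M[C]_m) (f : form) : form :=
  \sum_(a < m) \sum_(b < m) A a b *: wedge (theta b) (interior a f).

(* simultaneous contraction: f beta_1/\../\beta_k |-> f (A_|beta_1)/\../\(A_|beta_k) *)
Definition scontr (A : 'M[C]_m) (f : form) : form :=
  \sum_(S : {set 'I_m}) f S *: \big[wedge/mono set0]_(s <- enum S) contr A (theta s).

(* e^{+- g} := sum_k (+-1)^k / k! g^k ; the sum is taken over k up to the
   dimension of the space of forms, which equals the full series for any
   nilpotent g (as i_phi is). *)
Definition opexp (sgn : C) (g : form -> form) (f : form) : form :=
  \sum_(k < #|{set 'I_m}|.+1) (sgn ^+ k / (k`!)%:R) *: iter k g f.

(* inverse of an operator (a genuine inverse when the operator is bijective) *)
Definition opinv (g : form -> form) (y : form) : form :=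
  epsilon (inhabits (0 : form)) (fun x => g x = y).

End Forms.

Section Frame.
Variable C : numClosedFieldType.
Variable n : nat.
(* indices 'I_(n+n): lshift = type (1,0) (theta^i, e_i),
   rshift = type (0,1) (theta^{bar i}, e_{bar i}) *)

Definition conjm (M : 'M[C]_n) : 'M[C]_n := map_mx (fun x => x^*) M.

(* I' = theta^i (x) e_i,  I'' = theta^{bar i} (x) e_{bar i} *)
Definition Ip : 'M[C]_(n + n) := block_mx 1%:M 0 0 0.
Definition Ipp : 'M[C]_(n + n) := block_mx 0 0 0 1%:M.
Definition Ifull : 'M[C]_(n + n) := Ip + Ipp.

(* phi = phi^i_{bar j} theta^{bar j} (x) e_i *)
Definition beltrami (phi : 'M[C]_n) : 'M[C]_(n + n) := block_mx 0 phi 0 0.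
(* bar phi = phi^{bar i}_j theta^j (x) e_{bar i} *)
Definition beltrami_bar (phi : 'M[C]_n) : 'M[C]_(n + n) := block_mx 0 0 (conjm phi) 0.
(* T^{0,1}-valued (0,1)-form with coefficient matrix M *)
Definition emb01_01 (M : 'M[C]_n) : 'M[C]_(n + n) := block_mx 0 0 0 M.
(* T^{0,1}-valued (1,0)-form with coefficient matrix M *)
Definition emb10_01 (M : 'M[C]_n) : 'M[C]_(n + n) := block_mx 0 0 M 0.

(* i_phi and e^{i_phi | i_bar phi} = (I + phi + bar phi) simultaneous contraction *)
Definition i_phi (phi : 'M[C]_n) : cform C (n + n) -> cform C (n + n) :=
  contr (beltrami phi).
Definition eext (phi : 'M[C]_n) : cform C (n + n) -> cform C (n + n) :=
  scontr (Ifull + beltrami phi + beltrami_bar phi).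

End Frame.
Arguments Ip {C n}.
Arguments Ipp {C n}.
Arguments Ifull {C n}.

(* Fibrewise, complex forms on M are the exterior algebra over C on the
   2n one-forms theta^1..theta^n, theta^{bar 1}..theta^{bar n}, and a
   vector-valued 1-form is a matrix A (A a b = coefficient of theta^b (x) e_a).
   Two operators are attached to A:
   - the contraction  contr A, the derivation extending theta^a |-> A _| theta^a;
   - the simultaneous contraction  scontr A, the algebra endomorphism extending
     the same assignment on 1-forms.
   The proof rests on three general facts about these operators:
   (1) scontr A \o scontr B = scontr (B *m A) and scontr 1 = id, so scontr A is
       bijective when A is invertible;
   (2) if A *m A = 0, the derivation contr A is nilpotent and its exponential
       e^{s contr A} is the algebra endomorphism scontr (1 + s A);
   (3) two block-matrix identities (Schur complements) for the coefficient
       matrices of I + phi + bar phi and the operators of the theorem.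
   The theorem is the composition rule (1) applied to the exponentials (2)
   of i_phi = contr phi (phi *m phi = 0 as phi has type (0,1) (x) T^{1,0}),
   followed by the matrix identities (3). *)
From HB Require Import structures.
From mathcomp Require Import all_boot all_order all_algebra.
From mathcomp Require Import ring.
From Stdlib Require Import ClassicalEpsilon.
Set Implicit Arguments. Unset Strict Implicit. Unset Printing Implicit Defensive.
Import Order.TTheory GRing.Theory Num.Theory.
Local Open Scope ring_scope.

Section ExteriorAlgebra.
Variable C : numClosedFieldType.
Variable m : nat.
Local Notation form := (cform C m).
Local Notation one := (mono C (set0 : {set 'I_m})).
Implicit Types (S T U X : {set 'I_m}) (f g : form).

Lemma scaler_regE (c : C) (x : C^o) : c *: x = c * x. Proof. by []. Qed.

Lemma form_decomp f : f = \sum_S f S *: mono C S.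
Proof.
apply/ffunP => X; rewrite sum_ffunE (bigD1 X) //= big1 ?addr0.
  by rewrite !ffunE eqxx scaler_regE mulr1.
by move=> S /negPf SX; rewrite !ffunE eq_sym SX scaler_regE mulr0.
Qed.

Lemma sum_delta (V : lmodType C) (I : finType) (c : I) (F : I -> V) :
  \sum_a (a == c)%:R *: F a = F c.
Proof.
rewrite (bigD1 c) //= big1 ?addr0 => [|a /negPf ac]; first by rewrite eqxx scale1r.
by rewrite ac scale0r.
Qed.

Lemma sum_mono S0 (F : {set 'I_m} -> form) : \sum_S mono C S0 S *: F S = F S0.
Proof. by rewrite -(sum_delta S0 F); apply: eq_bigr => S _; rewrite ffunE. Qed.

Lemma setU1_ind (T : finType) (P : {set T} -> Prop) : P set0 ->
  (forall a (A : {set T}), a \notin A -> P A -> P (a |: A)) -> forall A, P A.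
Proof.
move=> P0 Pstep A; elim: {A}_.+1 {-2}A (ltnSn #|A|) => // N IH A.
case: (set_0Vmem A) => [->|[a aA]] // ltA.
rewrite -(setD1K aA); apply: Pstep; first by rewrite setD11.
by apply: IH; rewrite -ltnS (leq_trans _ ltA) // ltnS (cardsD1 a A) aA.
Qed.

Lemma form_eqN_eq0 f : f = - f -> f = 0.
Proof.
move=> h; apply/ffunP => X; have := congr1 (fun g : form => g X) h.
rewrite !ffunE => hX; apply/eqP.
have : f X *+ 2 == 0 by rewrite mulr2n {1}hX addNr.
by rewrite mulrn_eq0.
Qed.

(* The definitions of the wedge product, the interior product and the
   (simultaneous) contractions are themselves sums, so rewriting would match
   inside their expansions; the development works with sealed copies of them. *)
Definition wdg : form -> form -> form := locked (@wedge C m).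

Lemma wedgeE : @wedge C m = wdg. Proof. by rewrite /wdg -lock. Qed.

Definition wcoef S T : C := if [disjoint S & T] then wsign C S T else 0.

Lemma wdg_mono S T : wdg (mono C S) (mono C T) = wcoef S T *: mono C (S :|: T).
Proof.
rewrite -wedgeE /wedge.
under eq_bigr do under eq_bigr do rewrite -!scalerA.
under eq_bigr => S' _ do
  rewrite -scaler_sumr (sum_mono T (fun T' => wcoef S' T' *: mono C (S' :|: T'))).
exact: (sum_mono S (fun S' => wcoef S' T *: mono C (S' :|: T))).
Qed.

Lemma wdgDl (a a' b : form) : wdg (a + a') b = wdg a b + wdg a' b.
Proof.
rewrite -wedgeE /wedge -big_split; apply: eq_bigr => S _; rewrite -big_split.
by apply: eq_bigr => T _; rewrite ffunE !mulrDl scalerDl.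
Qed.

Lemma wdgDr (a b b' : form) : wdg a (b + b') = wdg a b + wdg a b'.
Proof.
rewrite -wedgeE /wedge -big_split; apply: eq_bigr => S _; rewrite -big_split.
by apply: eq_bigr => T _; rewrite ffunE !mulrDr !mulrDl scalerDl.
Qed.

Lemma wdgZl c (a b : form) : wdg (c *: a) b = c *: wdg a b.
Proof.
rewrite -wedgeE /wedge scaler_sumr; apply: eq_bigr => S _; rewrite scaler_sumr.
by apply: eq_bigr => T _; rewrite ffunE scalerA !mulrA.
Qed.

Lemma wdgZr c (a b : form) : wdg a (c *: b) = c *: wdg a b.
Proof.
rewrite -wedgeE /wedge scaler_sumr; apply: eq_bigr => S _; rewrite scaler_sumr.
by apply: eq_bigr => T _; rewrite ffunE scalerA /= mulrCA !mulrA.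
Qed.

Lemma wdg0l (b : form) : wdg 0 b = 0.
Proof. by rewrite -[0 in LHS](scale0r (0 : form)) wdgZl scale0r. Qed.

Lemma wdg0r (a : form) : wdg a 0 = 0.
Proof. by rewrite -[0 in LHS](scale0r (0 : form)) wdgZr scale0r. Qed.

Lemma wdgNl (a b : form) : wdg (- a) b = - wdg a b.
Proof. by rewrite -scaleN1r wdgZl scaleN1r. Qed.

Lemma wdgNr (a b : form) : wdg a (- b) = - wdg a b.
Proof. by rewrite -scaleN1r wdgZr scaleN1r. Qed.

Lemma wdg_suml (I : finType) (F : I -> form) b :
  wdg (\sum_i F i) b = \sum_i wdg (F i) b.
Proof. exact: (big_morph (fun a : form => wdg a b) (fun x y => wdgDl x y b) (wdg0l b)). Qed.

Lemma wdg_sumr (I : finType) (F : I -> form) a :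
  wdg a (\sum_i F i) = \sum_i wdg a (F i).
Proof. exact: (big_morph (wdg a) (wdgDr a) (wdg0r a)). Qed.

Definition inversions S T :=
  [set p : 'I_m * 'I_m | [&& p.1 \in S, p.2 \in T & (p.2 < p.1)%N]].

Lemma wsignE S T : wsign C S T = (-1) ^+ #|inversions S T|.
Proof. by []. Qed.

Lemma card_disjointU (T : finType) (A B : {set T}) :
  [disjoint A & B] -> #|A :|: B| = (#|A| + #|B|)%N.
Proof. by rewrite -setI_eq0 -cardsUI => /eqP ->; rewrite cards0 addn0. Qed.

Lemma wsignUl S T U : [disjoint S & T] -> wsign C (S :|: T) U = wsign C S U * wsign C T U.
Proof.
move=> dST; rewrite !wsignE; have -> : inversions (S :|: T) U = inversions S U :|: inversions T U.
  by apply/setP => p; rewrite !inE andb_orl.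
rewrite card_disjointU ?exprD // -setI_eq0; apply/eqP/setP => p; rewrite !inE.
apply/negP => /andP[/and3P[pS _ _] /and3P[pT _ _]].
by move: dST; rewrite -setI_eq0 => /eqP/setP/(_ p.1); rewrite !inE pS pT.
Qed.

Lemma wsignUr S T U : [disjoint T & U] -> wsign C S (T :|: U) = wsign C S T * wsign C S U.
Proof.
move=> dTU; rewrite !wsignE; have -> : inversions S (T :|: U) = inversions S T :|: inversions S U.
  by apply/setP => p; rewrite !inE andb_orl andb_orr.
rewrite card_disjointU ?exprD // -setI_eq0; apply/eqP/setP => p; rewrite !inE.
apply/negP => /andP[/and3P[_ pT _] /and3P[_ pU _]].
by move: dTU; rewrite -setI_eq0 => /eqP/setP/(_ p.2); rewrite !inE pT pU.
Qed.

Lemma wsign0l T : wsign C set0 T = 1.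
Proof. by rewrite wsignE (_ : inversions _ _ = set0) ?cards0 //; apply/setP => p; rewrite !inE. Qed.

Lemma wsign0r S : wsign C S set0 = 1.
Proof.
by rewrite wsignE (_ : inversions _ _ = set0) ?cards0 //; apply/setP => p; rewrite !inE andbF.
Qed.

Lemma disjointUl S T U : [disjoint S :|: T & U] = [disjoint S & U] && [disjoint T & U].
Proof. by rewrite -!setI_eq0 setIUl setU_eq0. Qed.

Lemma disjointUr S T U : [disjoint S & T :|: U] = [disjoint S & T] && [disjoint S & U].
Proof. by rewrite disjoint_sym disjointUl !(disjoint_sym S). Qed.

(* The cocycle identity behind associativity of the wedge product. *)
Lemma wcoefA S T U : wcoef S T * wcoef (S :|: T) U = wcoef T U * wcoef S (T :|: U).
Proof.
rewrite /wcoef disjointUl disjointUr.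
case dST: [disjoint S & T]; case dSU: [disjoint S & U]; case dTU: [disjoint T & U];
  rewrite ?mulr0 ?mul0r //=.
by rewrite wsignUl // wsignUr //; ring.
Qed.

Lemma wdgA (a b c : form) : wdg (wdg a b) c = wdg a (wdg b c).
Proof.
rewrite (form_decomp a) !wdg_suml; apply: eq_bigr => S _.
rewrite !wdgZl; congr (_ *: _).
rewrite (form_decomp b) wdg_sumr !wdg_suml wdg_sumr; apply: eq_bigr => T _.
rewrite wdgZr !wdgZl wdgZr; congr (_ *: _).
rewrite (form_decomp c) !wdg_sumr; apply: eq_bigr => U _.
rewrite !wdgZr; congr (_ *: _).
by rewrite !wdg_mono wdgZl wdgZr !wdg_mono !scalerA setUA wcoefA mulrC.
Qed.

Lemma wdg1l f : wdg one f = f.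
Proof.
rewrite {1}(form_decomp f) wdg_sumr [RHS]form_decomp; apply: eq_bigr => S _.
by rewrite wdgZr wdg_mono /wcoef -setI_eq0 set0I eqxx wsign0l scale1r set0U.
Qed.

Lemma wdg1r f : wdg f one = f.
Proof.
rewrite {1}(form_decomp f) wdg_suml [RHS]form_decomp; apply: eq_bigr => S _.
by rewrite wdgZl wdg_mono /wcoef -setI_eq0 setI0 eqxx wsign0r scale1r setU0.
Qed.

(* The number of elements of S below a: the sign of moving theta^a past them. *)
Definition nbelow (a : 'I_m) S := #|[set s in S | (s < a)%N]|.

Lemma wsign1 a S : wsign C [set a] S = (-1) ^+ nbelow a S.
Proof.
rewrite wsignE /nbelow.
have -> : inversions [set a] S = (fun s => (a, s)) @: [set s in S | (s < a)%N].
  apply/setP => [[x y]]; rewrite !inE /=.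
  apply/and3P/imsetP => [[/eqP -> yS ya]|[z]]; first by exists y; rewrite // !inE yS.
  by rewrite !inE => /andP[zS za] [-> ->]; rewrite eqxx zS.
by rewrite card_imset // => x y [].
Qed.

Lemma nbelowU1 (c x : 'I_m) S : c \notin S ->
  nbelow x (c |: S) = ((c < x)%N + nbelow x S)%N.
Proof.
move=> cS; rewrite /nbelow.
have -> : [set s in c |: S | (s < x)%N] =
  (if (c < x)%N then c |: [set s in S | (s < x)%N] else [set s in S | (s < x)%N]).
  apply/setP => s; case: ifP => cx; rewrite !inE;
    case: (eqVneq s c) => [->|] //=; by rewrite ?cx ?andbF.
by case: ifP => cx //; rewrite cardsU1 inE (negPf cS).
Qed.

Lemma nbelowD1 (c x : 'I_m) S : c \in S -> nbelow x S = ((c < x)%N + nbelow x (S :\ c))%N.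
Proof. by move=> cS; rewrite -nbelowU1 ?setD11 // setD1K. Qed.

Lemma nbelowD1_self (x : 'I_m) S : nbelow x (S :\ x) = nbelow x S.
Proof.
rewrite /nbelow; apply: eq_card => s; rewrite !inE.
by case: (eqVneq s x) => [->|] //=; rewrite ltnn !andbF.
Qed.

Lemma sign_sq (k : nat) : (-1) ^+ k * (-1) ^+ k = 1 :> C.
Proof. by rewrite -exprD -signr_odd oddD addbb. Qed.

Lemma wdg_theta_mono a S : wdg (theta C a) (mono C S) =
  if a \in S then 0 else ((-1) ^+ nbelow a S : C) *: mono C (a |: S).
Proof.
rewrite /theta wdg_mono /wcoef disjoints1 wsign1.
by case: (a \in S); rewrite ?scale0r.
Qed.

Lemma mono_setU1 (a : 'I_m) S : a \notin S ->
  mono C (a |: S) = ((-1) ^+ nbelow a S : C) *: wdg (theta C a) (mono C S).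
Proof. by move=> aS; rewrite wdg_theta_mono (negPf aS) scalerA sign_sq scale1r. Qed.

Lemma wdg_theta_anti a b : wdg (theta C a) (theta C b) = - wdg (theta C b) (theta C a).
Proof.
rewrite /theta -/(theta C b) wdg_theta_mono -/(theta C a) wdg_theta_mono !inE.
case: (a =P b) => [->|/eqP ab]; first by rewrite eqxx oppr0.
rewrite eq_sym (negPf ab) setUC /nbelow.
have below1 (x y : 'I_m) :
    [set s in [set y] | (s < x)%N] = if (y < x)%N then [set y] else set0.
  apply/setP => s; rewrite !inE; case: ifP; rewrite ?inE;
  by case: eqP => [->|] //= ->; rewrite ?andbF.
rewrite !below1; case: ltngtP => h; rewrite ?cards1 ?cards0 ?expr1 ?expr0;
  rewrite ?scaleN1r ?opprK ?scale1r //.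
by move/val_inj: h ab => ->; rewrite eqxx.
Qed.

Definition rowform (A : 'M[C]_m) (a : 'I_m) : form := \sum_b A a b *: theta C b.

Lemma rowform_1 (a : 'I_m) : rowform 1%:M a = theta C a.
Proof.
rewrite /rowform -(sum_delta a (@theta C m)); apply: eq_bigr => b _.
by rewrite mxE eq_sym.
Qed.

Lemma rowform0 (a : 'I_m) : rowform 0 a = 0.
Proof. by rewrite /rowform big1 // => b _; rewrite mxE scale0r. Qed.

Lemma rowformD A B (a : 'I_m) : rowform (A + B) a = rowform A a + rowform B a.
Proof. by rewrite /rowform -big_split; apply: eq_bigr => b _; rewrite mxE scalerDl. Qed.

Lemma rowformZ (s : C) A (a : 'I_m) : rowform (s *: A) a = s *: rowform A a.
Proof. by rewrite /rowform scaler_sumr; apply: eq_bigr => b _; rewrite mxE scalerA. Qed.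

Lemma wdg_rowforml A a f : wdg (rowform A a) f = \sum_b A a b *: wdg (theta C b) f.
Proof. by rewrite wdg_suml; apply: eq_bigr => b _; rewrite wdgZl. Qed.

Lemma wdg_rowform A B a b : wdg (rowform A a) (rowform B b) =
  \sum_c \sum_d (A a c * B b d) *: wdg (theta C c) (theta C d).
Proof.
rewrite wdg_rowforml; apply: eq_bigr => c _; rewrite wdg_sumr scaler_sumr.
by apply: eq_bigr => d _; rewrite wdgZr scalerA.
Qed.

Lemma wdg_rowform_anti A B a b :
  wdg (rowform A a) (rowform B b) = - wdg (rowform B b) (rowform A a).
Proof.
rewrite !wdg_rowform exchange_big /= -sumrN; apply: eq_bigr => c _.
rewrite -sumrN; apply: eq_bigr => d _.
by rewrite wdg_theta_anti scalerN mulrC.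
Qed.

Lemma wdg_rowform_sq A a : wdg (rowform A a) (rowform A a) = 0.
Proof. by apply: form_eqN_eq0; rewrite {1}wdg_rowform_anti. Qed.

Definition wprod (w : 'I_m -> form) (l : seq 'I_m) : form := \big[wdg/one]_(s <- l) w s.

Lemma wprod_nil w : wprod w [::] = one. Proof. by rewrite /wprod big_nil. Qed.

Lemma wprod_cons w x l : wprod w (x :: l) = wdg (w x) (wprod w l).
Proof. by rewrite /wprod big_cons. Qed.

Local Notation ltn_ord_rel := (fun x y : 'I_m => (x < y)%N).

Lemma wprod_filter_setU1 A (L : seq 'I_m) a S :
  sorted ltn_ord_rel L -> a \in L -> a \notin S ->
  wprod (rowform A) [seq s <- L | s \in a |: S] =
  ((-1) ^+ count (fun s : 'I_m => (s \in S) && (s < a)%N) L : C) *: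
     wdg (rowform A a) (wprod (rowform A) [seq s <- L | s \in S]).
Proof.
move=> + + aS; elim: L => // x L IH sxL.
have tr : transitive ltn_ord_rel by move=> u v w; apply: ltn_trans.
have allx := order_path_min tr sxL.
have sL := path_sorted sxL.
rewrite inE => /orP[/eqP ax|aL].
  subst x; have aL : a \notin L by apply/negP => /(allP allx); rewrite ltnn.
  rewrite /= setU11 (negPf aS) /= wprod_cons.
  have -> : [seq s <- L | s \in a |: S] = [seq s <- L | s \in S].
    by apply: eq_in_filter => s sL'; rewrite !inE; case: (s =P a) => // e; rewrite -e sL' in aL.
  rewrite (eq_in_count (a2 := pred0)) ?count_pred0 ?expr0 ?scale1r //.
  move=> s /(allP allx) ltas /=; apply/negP => /andP[_ /(ltn_trans ltas)].
  by rewrite ltnn.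
have xa : (x < a)%N by apply: (allP allx).
have xna : x != a by apply/negP => /eqP e; rewrite e ltnn in xa.
rewrite /= !inE (negPf xna) /= xa andbT.
case xS: (x \in S) => /=; last by rewrite IH.
rewrite !wprod_cons IH // wdgZr -!wdgA (wdg_rowform_anti A A x a) wdgNl.
by rewrite scalerN -scaleN1r scalerA add1n exprS.
Qed.

Lemma enum_filter S : enum S = [seq s <- enum 'I_m | s \in S].
Proof. by rewrite -deprecated_filter_index_enum [index_enum _]unlock enumT. Qed.

Lemma sorted_enum_ord : sorted ltn_ord_rel (enum 'I_m).
Proof. by have := iota_ltn_sorted 0 m; rewrite -val_enum_ord sorted_map. Qed.

Lemma wprod_enum_setU1 A (a : 'I_m) S : a \notin S ->
  wprod (rowform A) (enum (a |: S)) =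
  ((-1) ^+ nbelow a S : C) *: wdg (rowform A a) (wprod (rowform A) (enum S)).
Proof.
move=> aS; rewrite !enum_filter wprod_filter_setU1 ?mem_enum //; last exact: sorted_enum_ord.
congr (_ ^+ _ *: _); rewrite /nbelow cardE enum_filter size_filter.
by apply: eq_count => s; rewrite inE.
Qed.

Lemma wprod_theta_enum S : wprod (rowform 1%:M) (enum S) = mono C S.
Proof.
elim/setU1_ind: S => [|a S aS IH]; first by rewrite enum_set0 wprod_nil.
by rewrite wprod_enum_setU1 // IH rowform_1 mono_setU1.
Qed.

Definition intr (c : 'I_m) : form -> form := locked (@interior C m c).

Lemma interiorE c : @interior C m c = intr c. Proof. by rewrite /intr -lock. Qed.

Lemma intrD c f g : intr c (f + g) = intr c f + intr c g.
Proof.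
by rewrite -interiorE; apply/ffunP => X; rewrite !ffunE; case: ifP; rewrite ?addr0 // mulrDr.
Qed.

Lemma intrZ c k f : intr c (k *: f) = k *: intr c f.
Proof.
rewrite -interiorE; apply/ffunP => X; rewrite !ffunE.
by case: ifP; rewrite scaler_regE ?mulr0 // mulrCA.
Qed.

Lemma intr0 c : intr c 0 = 0.
Proof. by rewrite -[0 in LHS](scale0r (0 : form)) intrZ scale0r. Qed.

Lemma intr_sum c (I : finType) (F : I -> form) : intr c (\sum_i F i) = \sum_i intr c (F i).
Proof. exact: (big_morph (intr c) (intrD c) (intr0 c)). Qed.

Lemma intr_mono (c : 'I_m) S :
  intr c (mono C S) = if c \in S then ((-1) ^+ nbelow c S : C) *: mono C (S :\ c) else 0.
Proof.
rewrite -interiorE; apply/ffunP => X; rewrite !ffunE.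
case: ifP => cX.
  case: ifP => cS; rewrite ffunE // ffunE scaler_regE.
  by case: eqP => [eX|_] /=; [rewrite eX setD11 in cX | rewrite mulr0].
case: ifP => cS; last first.
  rewrite ffunE; case: eqP => [eX|_] /=; last by rewrite mulr0.
  by rewrite -eX setU11 in cS.
rewrite !ffunE scaler_regE.
have -> : (c |: X == S) = (X == S :\ c).
  apply/eqP/eqP => [<-|->]; first by rewrite setU1K ?cX.
  by rewrite setD1K.
case: eqP => [->|_] /=; last by rewrite !mulr0.
by rewrite -[#|_|]/(nbelow c (S :\ c)) nbelowD1_self.
Qed.

Lemma intr_theta (a c : 'I_m) : intr a (theta C c) = (a == c)%:R *: one.
Proof.
rewrite /theta intr_mono inE; case: eqP => [->|_]; last by rewrite scale0r.
rewrite setDv /nbelow (_ : [set s in [set c] | (s < c)%N] = set0) ?cards0 ?expr0 //.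
by apply/setP => s; rewrite !inE; case: eqP => // ->; rewrite ltnn.
Qed.

Lemma sign_neq (a c : 'I_m) : a != c -> (-1) ^+ (c < a)%N * (-1) ^+ (a < c)%N = -1 :> C.
Proof.
move=> ac; case: ltngtP => h; rewrite ?expr0 ?expr1 ?mulr1 ?mul1r //.
by move/val_inj: h ac => ->; rewrite eqxx.
Qed.

Lemma intr_theta_mono (c a : 'I_m) S :
  intr c (wdg (theta C a) (mono C S)) =
  (c == a)%:R *: mono C S - wdg (theta C a) (intr c (mono C S)).
Proof.
rewrite wdg_theta_mono; case: ifP => aS.
  rewrite intr0 intr_mono; case: (c =P a) => [->|/eqP ca] /=.
    rewrite aS wdgZr wdg_theta_mono setD11 scalerA -(nbelowD1_self a S) sign_sq.
    by rewrite scale1r setD1K // scale1r subrr.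
  rewrite scale0r sub0r; case: ifP => cS; last by rewrite wdg0r oppr0.
  by rewrite wdgZr wdg_theta_mono !inE aS andbT eq_sym ca scaler0 oppr0.
rewrite intrZ intr_mono !inE; case: (c =P a) => [->|/eqP ca] /=.
  rewrite intr_mono aS wdg0r subr0 scale1r setU1K ?aS // nbelowU1 ?aS // ltnn add0n.
  by rewrite scalerA sign_sq scale1r.
rewrite scale0r sub0r intr_mono; case: ifP => cS; last by rewrite scaler0 wdg0r oppr0.
rewrite wdgZr wdg_theta_mono !inE eq_sym ca aS /=.
have aS' : a \notin S by rewrite aS.
rewrite (nbelowU1 c aS') (nbelowD1 a cS) !scalerA.
have -> : (a |: S) :\ c = a |: (S :\ c).
  apply/setP => s; rewrite !inE; case: (s =P c) => [->|] //=.
  by rewrite orbF (negPf ca).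
rewrite -scaleNr; congr (_ *: _).
by rewrite !exprD mulrACA sign_neq 1?eq_sym //; ring.
Qed.

Lemma intr_theta_wdg (c a : 'I_m) g :
  intr c (wdg (theta C a) g) = (c == a)%:R *: g - wdg (theta C a) (intr c g).
Proof.
rewrite (form_decomp g) wdg_sumr !intr_sum wdg_sumr scaler_sumr -sumrB.
apply: eq_bigr => S _; rewrite wdgZr !intrZ wdgZr intr_theta_mono scalerBr.
by rewrite !scalerA mulrC.
Qed.

Definition ctr (A : 'M[C]_m) : form -> form := locked (@contr C m A).

Lemma contrE A : @contr C m A = ctr A. Proof. by rewrite /ctr -lock. Qed.

Lemma ctr_expand A f : ctr A f = \sum_a \sum_b A a b *: wdg (theta C b) (intr a f).
Proof. by rewrite -contrE /contr wedgeE; under eq_bigr do under eq_bigr do rewrite interiorE. Qed.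

Lemma ctrD A f g : ctr A (f + g) = ctr A f + ctr A g.
Proof.
rewrite !ctr_expand -big_split; apply: eq_bigr => a _; rewrite -big_split.
by apply: eq_bigr => b _; rewrite intrD wdgDr scalerDr.
Qed.

Lemma ctrZ A k f : ctr A (k *: f) = k *: ctr A f.
Proof.
rewrite !ctr_expand scaler_sumr; apply: eq_bigr => a _; rewrite scaler_sumr.
by apply: eq_bigr => b _; rewrite intrZ wdgZr !scalerA mulrC.
Qed.

Lemma ctr0 A : ctr A 0 = 0.
Proof. by rewrite -[0 in LHS](scale0r (0 : form)) ctrZ scale0r. Qed.

Lemma ctr_sum A (I : finType) (F : I -> form) : ctr A (\sum_i F i) = \sum_i ctr A (F i).
Proof. exact: (big_morph (ctr A) (ctrD A) (ctr0 A)). Qed.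

Lemma ctr_theta A (c : 'I_m) : ctr A (theta C c) = rowform A c.
Proof.
rewrite ctr_expand -(sum_delta c (rowform A)); apply: eq_bigr => a _.
rewrite scaler_sumr; apply: eq_bigr => b _.
by rewrite intr_theta wdgZr wdg1r !scalerA mulrC.
Qed.

Lemma ctr_one A : ctr A one = 0.
Proof.
rewrite ctr_expand big1 // => a _; rewrite big1 // => b _.
by rewrite intr_mono inE wdg0r scaler0.
Qed.

Lemma ctr_theta_wdg A (a : 'I_m) g :
  ctr A (wdg (theta C a) g) = wdg (rowform A a) g + wdg (theta C a) (ctr A g).
Proof.
rewrite ctr_expand.
transitivity (\sum_c \sum_b A c b *: ((c == a)%:R *: wdg (theta C b) g) +
              \sum_c \sum_b A c b *: wdg (theta C a) (wdg (theta C b) (intr c g))).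
  rewrite -big_split; apply: eq_bigr => c _; rewrite -big_split; apply: eq_bigr => b _.
  rewrite intr_theta_wdg wdgDr wdgNr wdgZr /= -scalerDr; congr (_ *: (_ + _)).
  by rewrite -!wdgA wdg_theta_anti wdgNl opprK.
congr (_ + _).
  rewrite wdg_rowforml exchange_big /=; apply: eq_bigr => b _.
  rewrite -(sum_delta a (fun c => A c b *: wdg (theta C b) g)); apply: eq_bigr => c _.
  by rewrite !scalerA mulrC.
rewrite ctr_expand wdg_sumr; apply: eq_bigr => c _; rewrite wdg_sumr.
by apply: eq_bigr => b _; rewrite wdgZr.
Qed.

Lemma ctr_rowform A B (a : 'I_m) : ctr A (rowform B a) = rowform (B *m A) a.
Proof.
rewrite ctr_sum.
transitivity (\sum_b \sum_c (B a b * A b c) *: theta C c).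
  apply: eq_bigr => b _; rewrite ctrZ ctr_theta scaler_sumr.
  by apply: eq_bigr => c _; rewrite scalerA.
by rewrite exchange_big /=; apply: eq_bigr => c _; rewrite mxE scaler_suml.
Qed.

Lemma ctr_rowform_wdg A B (a : 'I_m) g :
  ctr A (wdg (rowform B a) g) = wdg (rowform (B *m A) a) g + wdg (rowform B a) (ctr A g).
Proof.
rewrite wdg_rowforml ctr_sum -ctr_rowform.
transitivity (\sum_b B a b *: wdg (rowform A b) g + \sum_b B a b *: wdg (theta C b) (ctr A g)).
  by rewrite -big_split; apply: eq_bigr => b _; rewrite ctrZ ctr_theta_wdg scalerDr.
congr (_ + _); last by rewrite wdg_rowforml.
rewrite ctr_sum wdg_suml; apply: eq_bigr => b _.
by rewrite ctrZ ctr_theta wdgZl.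
Qed.

Definition sctr (A : 'M[C]_m) : form -> form := locked (@scontr C m A).

Lemma scontrE A : @scontr C m A = sctr A. Proof. by rewrite /sctr -lock. Qed.

Lemma sctr_expand A f : sctr A f = \sum_S f S *: wprod (rowform A) (enum S).
Proof.
rewrite -scontrE; apply: eq_bigr => S _; congr (_ *: _).
by rewrite wedgeE; apply: eq_bigr => s _; rewrite contrE ctr_theta.
Qed.

Lemma sctr_mono A S : sctr A (mono C S) = wprod (rowform A) (enum S).
Proof. by rewrite sctr_expand (sum_mono S (fun S' => wprod (rowform A) (enum S'))). Qed.

Lemma sctrD A f g : sctr A (f + g) = sctr A f + sctr A g.
Proof. by rewrite !sctr_expand -big_split; apply: eq_bigr => S _; rewrite ffunE scalerDl. Qed.

Lemma sctrZ A c f : sctr A (c *: f) = c *: sctr A f.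
Proof.
by rewrite !sctr_expand scaler_sumr; apply: eq_bigr => S _; rewrite ffunE scalerA.
Qed.

Lemma sctr0 A : sctr A 0 = 0.
Proof. by rewrite -[0 in LHS](scale0r (0 : form)) sctrZ scale0r. Qed.

Lemma sctr_sum A (I : finType) (F : I -> form) : sctr A (\sum_i F i) = \sum_i sctr A (F i).
Proof. exact: (big_morph (sctr A) (sctrD A) (sctr0 A)). Qed.

Lemma sctr_one A : sctr A one = one.
Proof. by rewrite sctr_mono enum_set0 wprod_nil. Qed.

Lemma sctr_theta_wdg A (a : 'I_m) f :
  sctr A (wdg (theta C a) f) = wdg (rowform A a) (sctr A f).
Proof.
rewrite {1}(form_decomp f) wdg_sumr sctr_sum [sctr A f]sctr_expand wdg_sumr.
apply: eq_bigr => S _; rewrite wdgZr sctrZ wdgZr; congr (_ *: _).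
rewrite wdg_theta_mono; case: ifP => aS.
  rewrite sctr0 -(setD1K aS) wprod_enum_setU1 ?setD11 // wdgZr -wdgA.
  by rewrite wdg_rowform_sq wdg0l scaler0.
by rewrite sctrZ sctr_mono wprod_enum_setU1 ?aS // scalerA sign_sq scale1r.
Qed.

Lemma sctr_wdg A f g : sctr A (wdg f g) = wdg (sctr A f) (sctr A g).
Proof.
rewrite (form_decomp f) wdg_suml !sctr_sum wdg_suml; apply: eq_bigr => S _.
rewrite wdgZl !sctrZ wdgZl; congr (_ *: _).
elim/setU1_ind: S => [|a S aS IH]; first by rewrite wdg1l sctr_one wdg1l.
by rewrite mono_setU1 // wdgZl !sctrZ wdgZl wdgA !sctr_theta_wdg IH wdgA.
Qed.

Lemma sctr_rowform A B (a : 'I_m) : sctr A (rowform B a) = rowform (B *m A) a.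
Proof.
rewrite sctr_sum.
transitivity (\sum_b \sum_c (B a b * A b c) *: theta C c).
  apply: eq_bigr => b _; rewrite sctrZ sctr_mono enum_set1 wprod_cons wprod_nil wdg1r.
  by rewrite scaler_sumr; apply: eq_bigr => c _; rewrite scalerA.
by rewrite exchange_big /=; apply: eq_bigr => c _; rewrite mxE scaler_suml.
Qed.

Lemma sctr_wprod A B l : sctr A (wprod (rowform B) l) = wprod (rowform (B *m A)) l.
Proof.
elim: l => [|x l IH]; first by rewrite !wprod_nil sctr_one.
by rewrite !wprod_cons sctr_wdg IH sctr_rowform.
Qed.

Lemma sctr_comp A B f : sctr A (sctr B f) = sctr (B *m A) f.
Proof.
rewrite [sctr B f]sctr_expand sctr_sum [RHS]sctr_expand; apply: eq_bigr => S _.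
by rewrite sctrZ sctr_wprod.
Qed.

Lemma sctr_id f : sctr 1%:M f = f.
Proof.
by rewrite sctr_expand [RHS]form_decomp; apply: eq_bigr => S _; rewrite wprod_theta_enum.
Qed.

Lemma iter_ctrD A k f g : iter k (ctr A) (f + g) = iter k (ctr A) f + iter k (ctr A) g.
Proof. by elim: k => //= k ->; rewrite ctrD. Qed.

Lemma iter_ctrZ A k (c : C) f : iter k (ctr A) (c *: f) = c *: iter k (ctr A) f.
Proof. by elim: k => //= k ->; rewrite ctrZ. Qed.

Lemma iter_ctr_theta_wdg A (AA : A *m A = 0) k (a : 'I_m) g :
  iter k (ctr A) (wdg (theta C a) g) =
  wdg (theta C a) (iter k (ctr A) g) + k%:R *: wdg (rowform A a) (iter k.-1 (ctr A) g).
Proof.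
elim: k => [|k IH]; first by rewrite /= scale0r addr0.
rewrite iterS IH ctrD ctr_theta_wdg ctrZ ctr_rowform_wdg AA rowform0 wdg0l add0r -iterS.
case: k IH => [|k] IH /=; first by rewrite scale0r addr0 scale1r addrC.
by rewrite [k.+2%:R]mulrS scalerDl scale1r addrCA addrA.
Qed.

Definition texp (s : C) (A : 'M[C]_m) (N : nat) (f : form) : form :=
  \sum_(k < N.+1) (s ^+ k / (k`!)%:R) *: iter k (ctr A) f.

Lemma texpD s A N f g : texp s A N (f + g) = texp s A N f + texp s A N g.
Proof. by rewrite /texp -big_split; apply: eq_bigr => k _; rewrite iter_ctrD scalerDr. Qed.

Lemma texpZ s A N (c : C) f : texp s A N (c *: f) = c *: texp s A N f.
Proof.
rewrite /texp scaler_sumr; apply: eq_bigr => k _.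
by rewrite iter_ctrZ !scalerA mulrC.
Qed.

Lemma texp0 s A N : texp s A N 0 = 0.
Proof. by rewrite -[0 in LHS](scale0r (0 : form)) texpZ scale0r. Qed.

Lemma texp_sum s A N (I : finType) (F : I -> form) :
  texp s A N (\sum_i F i) = \sum_i texp s A N (F i).
Proof. exact: (big_morph (texp s A N) (texpD s A N) (texp0 s A N)). Qed.

Lemma texp_one s A N : texp s A N one = one.
Proof.
have iter_one k : iter k.+1 (ctr A) one = 0.
  by elim: k => [|k IH] /=; [rewrite ctr_one | rewrite -/(iter k.+1 _ _) IH ctr0].
rewrite /texp big_ord_recl big1 ?addr0 /=; first by rewrite expr0 div1r invr1 scale1r.
by move=> k _; have /= -> := iter_one k; rewrite scaler0.
Qed.

Lemma texp_theta_wdg A (AA : A *m A = 0) s N (a : 'I_m) g :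
  texp s A N.+1 (wdg (theta C a) g) =
  wdg (theta C a) (texp s A N.+1 g) + s *: wdg (rowform A a) (texp s A N g).
Proof.
rewrite /texp.
under eq_bigr do rewrite iter_ctr_theta_wdg // scalerDr.
rewrite big_split /=; congr (_ + _).
  by rewrite wdg_sumr; apply: eq_bigr => k _; rewrite wdgZr.
rewrite big_ord_recl /= scale0r scaler0 add0r wdg_sumr scaler_sumr.
apply: eq_bigr => k _; rewrite wdgZr !scalerA; congr (_ *: _).
have k1_neq0 : (k.+1)%:R != 0 :> C by rewrite pnatr_eq0.
have fact_neq0 : (k`!)%:R != 0 :> C by rewrite pnatr_eq0 -lt0n fact_gt0.
rewrite /bump /= add1n factS natrM exprS.
by field; rewrite fact_neq0 -mulrS k1_neq0.
Qed.

Lemma texp_mono A (AA : A *m A = 0) s S N : (#|S| <= N)%N ->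
  texp s A N (mono C S) = sctr (1%:M + s *: A) (mono C S).
Proof.
elim/setU1_ind: S N => [|a S aS IH] N; first by rewrite sctr_one texp_one.
rewrite cardsU1 aS add1n; case: N => // N ltSN.
rewrite mono_setU1 // texpZ sctrZ sctr_theta_wdg texp_theta_wdg // !IH //; last exact: ltnW.
by rewrite rowformD rowformZ rowform_1 wdgDl wdgZl.
Qed.

Lemma opexp_nilpotent A (AA : A *m A = 0) s f :
  opexp s (contr A) f = sctr (1%:M + s *: A) f.
Proof.
have card_le S : (#|S| <= #|{set 'I_m}|)%N.
  rewrite (leq_trans (max_card (mem S))) // card_ord -cardsT -powersetT card_powerset.
  by rewrite cardsT card_ord ltnW // ltn_expl.
rewrite contrE -[opexp _ _ _]/(texp s A _ f) (form_decomp f) texp_sum sctr_sum.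
by apply: eq_bigr => S _; rewrite texpZ sctrZ texp_mono.
Qed.

Lemma opinv_eq (g : form -> form) y x : injective g -> g x = y -> opinv g y = x.
Proof.
move=> g_inj gx; apply: g_inj; rewrite gx.
exact: (epsilon_spec (inhabits (0 : form)) (fun z => g z = y) (ex_intro _ x gx)).
Qed.

End ExteriorAlgebra.

Section BlockMatrices.
Variable C : numClosedFieldType.
Variable n : nat.
Implicit Types X Y phi : 'M[C]_n.

Lemma det_block_unipotent X Y :
  \det (block_mx 1%:M X Y 1%:M) = \det (1%:M - X *m Y) /\
  \det (block_mx 1%:M X Y 1%:M) = \det (1%:M - Y *m X).
Proof.
split.
  have -> : block_mx 1%:M X Y 1%:M =
            block_mx (1%:M - X *m Y) X 0 1%:M *m block_mx 1%:M 0 Y 1%:M.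
    by rewrite mulmx_block ?mulmx1 ?mulmx0 ?mul1mx ?mul0mx ?addr0 ?add0r subrK.
  by rewrite det_mulmx det_ublock det_lblock !det1 !mulr1.
have -> : block_mx 1%:M X Y 1%:M =
          block_mx 1%:M 0 Y 1%:M *m block_mx 1%:M X 0 (1%:M - Y *m X).
  by rewrite mulmx_block ?mulmx1 ?mulmx0 ?mul1mx ?mul0mx ?addr0 ?add0r addrC subrK.
by rewrite det_mulmx det_ublock det_lblock !det1 !mul1r.
Qed.

Lemma Ifull_id : Ifull = 1%:M :> 'M[C]_(n + n).
Proof. by rewrite /Ifull /Ip /Ipp add_block_mx ?addr0 add0r -scalar_mx_block. Qed.

Lemma eext_mx phi :
  Ifull + beltrami phi + beltrami_bar phi = block_mx 1%:M phi (conjm phi) 1%:M.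
Proof. by rewrite /Ifull /Ip /Ipp /beltrami /beltrami_bar !add_block_mx ?addr0 ?add0r. Qed.

(* phi takes values in T^{1,0} and eats (0,1)-forms, so phi . phi = 0. *)
Lemma beltrami_sq phi : beltrami phi *m beltrami phi = 0.
Proof. by rewrite /beltrami mulmx_block ?mulmx0 ?mul0mx ?addr0 block_mx0. Qed.

Lemma eext_mx_mul_neg phi :
  (Ifull + beltrami phi + beltrami_bar phi) *m (1%:M + (-1) *: beltrami phi) =
  Ifull - emb01_01 (conjm phi *m phi) + beltrami_bar phi.
Proof.
rewrite eext_mx Ifull_id /beltrami /beltrami_bar /emb01_01 (scalar_mx_block n n).
rewrite scale_block_mx ?scaler0 add_block_mx ?addr0 add0r mulmx_block.
rewrite opp_block_mx ?oppr0 !add_block_mx ?addr0 ?add0r.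
rewrite ?mul1mx ?mulmx1 ?mulmx0 ?mul0mx ?addr0.
by rewrite !scaleN1r addNr mulmxN addrC.
Qed.

Lemma inv_mx_mul_eext phi : 1%:M - phi *m conjm phi \in unitmx ->
  (Ip + emb01_01 (invmx (1%:M - conjm phi *m phi))
      - emb10_01 (conjm phi *m invmx (1%:M - phi *m conjm phi))) *m
  (Ifull + beltrami phi + beltrami_bar phi) = 1%:M + 1 *: beltrami phi.
Proof.
set ph := conjm phi; set P := 1%:M - phi *m ph; set Q := 1%:M - ph *m phi => P_unit.
have Q_unit : Q \in unitmx.
  have [detP detQ] := det_block_unipotent phi ph.
  by move: P_unit; rewrite !unitmxE -detP detQ.
have commute_inv : invmx Q *m ph = ph *m invmx P.
  have : ph *m P = Q *m ph by rewrite mulmxBr mulmxBl mulmx1 mul1mx mulmxA.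
  move=> /(congr1 (mulmx (invmx Q))) /(congr1 (mulmx^~ (invmx P))).
  by rewrite !mulmxA (mulVmx Q_unit) mul1mx -!mulmxA (mulmxV P_unit) mulmx1.
have schur : invmx Q - ph *m invmx P *m phi = 1%:M.
  rewrite -commute_inv -mulmxA -{1}(mulmx1 (invmx Q)) -mulmxBr.
  exact: (mulVmx Q_unit).
rewrite eext_mx /Ip /emb01_01 /emb10_01 /beltrami (scalar_mx_block n n).
rewrite opp_block_mx ?oppr0 !add_block_mx scale_block_mx ?scaler0 add_block_mx mulmx_block.
rewrite ?mulmx1 ?mulmx0 ?mul1mx ?mul0mx ?addr0 ?add0r scale1r.
rewrite (mul0mx _ ph); congr block_mx; first exact: addr0; first exact: mul1mx.
  by rewrite commute_inv; apply: addNr.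
by rewrite mulNmx addrC; apply: schur.
Qed.

End BlockMatrices.

Theorem mainTheorem13 (C : numClosedFieldType) (n : nat) (phi : 'M[C]_n) :
  \det (1%:M - phi *m conjm phi) != 0 ->
  [/\ (forall f : cform C (n + n),
         opexp (-1) (i_phi phi) (eext phi f)
         = scontr (Ifull - emb01_01 (conjm phi *m phi) + beltrami_bar phi) f),
      bijective (eext phi) &
      (forall f : cform C (n + n),
         opinv (eext phi) (opexp 1 (i_phi phi) f)
         = scontr (Ip + emb01_01 (invmx (1%:M - conjm phi *m phi))
                   - emb10_01 (conjm phi *m invmx (1%:M - phi *m conjm phi))) f)].
Proof.
move=> detP; set A := Ifull + beltrami phi + beltrami_bar phi.
have P_unit : 1%:M - phi *m conjm phi \in unitmx by rewrite unitmxE unitfE.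
have A_unit : A \in unitmx.
  by rewrite /A eext_mx unitmxE unitfE (det_block_unipotent phi (conjm phi)).1.
have eextE : eext phi = sctr A by rewrite /eext scontrE.
have i_phi_exp s f : opexp s (i_phi phi) f = sctr (1%:M + s *: beltrami phi) f.
  exact: opexp_nilpotent (beltrami_sq phi) s f.
have eext_bij : bijective (eext phi).
  rewrite eextE; exists (sctr (invmx A)) => f.
    by rewrite sctr_comp (mulmxV A_unit) sctr_id.
  by rewrite sctr_comp (mulVmx A_unit) sctr_id.
split=> // f.
  by rewrite i_phi_exp eextE sctr_comp eext_mx_mul_neg scontrE.
apply: opinv_eq (bij_inj eext_bij) _.
by rewrite eextE scontrE sctr_comp inv_mx_mul_eext // i_phi_exp.
Qed.
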